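(* Let $R$ be a GSWNC ring and let $e \in R$ be a non-zero idempotent. Then the corner ring $eRe$ is a GSWNC ring.
   Context: All rings are associative with identity; $eRe$ has identity $e$. An element $a$ of a ring is strongly weakly nil-clean if there exist an idempotent $f$ and a nilpotent $q$ with $fq = qf$ such that $a = q + f$ or $a = q - f$. A ring is GSWNC if every non-invertible element is strongly weakly nil-clean. *)

From mathcomp Require Import all_boot all_order all_algebra.
Set Implicit Arguments. Unset Strict Implicit. Unset Printing Implicit Defensive.
Import GRing.Theory.
Local Open Scope ring_scope.

Section Defs.
Variable R : nzRingType.

Definition is_idem (f : R) : Prop := f * f = f.
Definition is_nilp (q : R) : Prop := exists n : nat, q ^+ n = 0.

Definition swnc (a : R) : Prop :=
  exists f q : R, is_idem f /\ is_nilp q /\ f * q = q * f /\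
                  (a = q + f \/ a = q - f).

Definition invertible (a : R) : Prop := exists b : R, a * b = 1 /\ b * a = 1.

Definition GSWNC : Prop := forall a : R, ~ invertible a -> swnc a.

Definition in_corner (e x : R) : Prop := x = e * x * e.

Definition corner_invertible (e a : R) : Prop :=
  exists b : R, in_corner e b /\ a * b = e /\ b * a = e.

(* a strongly weakly nil-clean in eRe: is_idem and is_nilp taken in eRe
   (ring operations of eRe are those of R; positive powers agree) *)
Definition corner_swnc (e a : R) : Prop :=
  exists f q : R, in_corner e f /\ in_corner e q /\
    is_idem f /\ is_nilp q /\ f * q = q * f /\
    (a = q + f \/ a = q - f).

Definition corner_GSWNC (e : R) : Prop :=
  forall a : R, in_corner e a -> ~ corner_invertible e a -> corner_swnc e a.
End Defs.

(* Put x := a + (1 - e) for a non-invertible a in eRe. Then x is not invertible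
   in R and commutes with e, and e * x = a. Up to sign x is strongly nil-clean,
   so y := +-x satisfies (y - y^2)^n = 0. Newton's iteration p |-> 3p^2 - 2p^3
   lifts y to an idempotent F = P(y) with y - F nilpotent; being a polynomial in
   y, F commutes with e, so e * y = e * (y - F) + e * F is a strongly nil-clean
   decomposition inside eRe. *)
From mathcomp Require Import all_boot all_order all_algebra.
From mathcomp Require Import ring.
Set Implicit Arguments. Unset Strict Implicit. Unset Printing Implicit Defensive.
Import GRing.Theory.
Local Open Scope ring_scope.

Fixpoint idem_lift_poly (k : nat) : {poly int} :=
  if k is k'.+1 then
    let p := idem_lift_poly k' in 3 * p ^+ 2 - 2 * p ^+ 3
  else 'X.

(* p - p^2 gains a factor X - X^2 at each step, while X - p stays divisible
   by X - X^2. *)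
Lemma idem_lift_polyP k : exists A B : {poly int},
  let p := idem_lift_poly k in
  p - p ^+ 2 = ('X - 'X ^+ 2) ^+ k.+1 * A /\ 'X - p = ('X - 'X ^+ 2) * B.
Proof.
elim: k => [|k [A [B]]] /=; first by exists 1, 0; split; ring.
set p := idem_lift_poly k; set t : {poly int} := 'X - 'X ^+ 2 => -[hA hB].
exists (t ^+ k * A ^+ 2 * ((3 - 2 * p) * (1 + 2 * p))).
exists (B + t ^+ k * A * (1 - 2 * p)); split.
- have -> : 3 * p ^+ 2 - 2 * p ^+ 3 - (3 * p ^+ 2 - 2 * p ^+ 3) ^+ 2
     = (p - p ^+ 2) ^+ 2 * ((3 - 2 * p) * (1 + 2 * p)) by ring.
  by rewrite hA !exprS; ring.
- have -> : 'X - (3 * p ^+ 2 - 2 * p ^+ 3)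
     = ('X - p) + (p - p ^+ 2) * (1 - 2 * p) by ring.
  by rewrite hA hB exprS; ring.
Qed.

Section Ring.
Variable R : nzRingType.
Implicit Types a e f q x y : R.

Definition strongly_nil_clean a : Prop :=
  exists f q, is_idem f /\ is_nilp q /\ f * q = q * f /\ a = q + f.

Lemma nilpN q : is_nilp q -> is_nilp (- q).
Proof. by case=> n hn; exists n; rewrite exprNn hn mulr0. Qed.

Lemma nilp_mul_comm q x : is_nilp q -> GRing.comm q x -> is_nilp (q * x).
Proof. by case=> n hn hqx; exists n; rewrite exprMn_comm // hn mul0r. Qed.

Lemma swnc_strongly_nil_cleanN a :
  swnc a -> strongly_nil_clean a \/ strongly_nil_clean (- a).
Proof.
case=> f [q [hf [hq [hfq [->|->]]]]]; first by left; exists f, q.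
right; exists f, (- q); do !split => //; first exact: nilpN.
- by rewrite mulrN mulNr hfq.
- by rewrite opprB addrC.
Qed.

Lemma strongly_nil_clean_nilp y : strongly_nil_clean y -> is_nilp (y - y ^+ 2).
Proof.
case=> f [q [hf [hq [hfq ->]]]].
have -> : q + f - (q + f) ^+ 2 = q * (1 - q - 2%:R * f).
  rewrite expr2 mulrDl !mulrDr hf mulr1 !mulrN mulr_natl mulrnAr -hfq mulr2n.
  by rewrite !opprD !addrA; do 3!rewrite (addrAC _ f); rewrite addrK.
apply: nilp_mul_comm => //.
by apply/commrB/commrM; [apply/commrB/commr_refl/commr1|apply/commr_nat|].
Qed.

Lemma idem_lift y : is_nilp (y - y ^+ 2) ->
  exists F, is_idem F /\ is_nilp (y - F) /\
    forall z, GRing.comm z y -> GRing.comm z F.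
Proof.
case=> n hn.
have cfu : commr_rmorph (intr : int -> R) y by move=> i; exact: commr_int.
pose h : {rmorphism {poly int} -> R} := horner_morph cfu.
have hT : h ('X - 'X ^+ 2) = y - y ^+ 2 by rewrite rmorphB rmorphXn /= horner_morphX.
have [A [B /= [hA hB]]] := idem_lift_polyP n.
set p := idem_lift_poly n in hA hB.
exists (h p); split; [|split].
- have h0 : h p - h p ^+ 2 = 0.
    by rewrite -rmorphXn -rmorphB hA rmorphM rmorphXn /= hT exprSr hn !mul0r.
  by apply/esym/eqP; rewrite -subr_eq0 -expr2 h0.
- rewrite -[y](horner_morphX cfu) -rmorphB hB rmorphM hT.
  apply: nilp_mul_comm; first by exists n.
  by rewrite /GRing.comm -hT -!rmorphM mulrC.
- move=> z hz; apply: commr_horner => // i.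
  by rewrite coef_map; exact/commr_sym/commr_int.
Qed.

Lemma corner_mul_comm e x : is_idem e -> GRing.comm e x -> in_corner e (e * x).
Proof. by move=> he hx; rewrite /in_corner mulrA he -mulrA -hx mulrA he. Qed.

Lemma mul_idem_comm e x y : is_idem e -> GRing.comm e x ->
  e * x * (e * y) = e * (x * y).
Proof. by move=> he hx; rewrite -mulrA (mulrA x) -hx !mulrA he. Qed.

Lemma corner_swnc_mul_idem e y : is_idem e -> GRing.comm e y ->
  is_nilp (y - y ^+ 2) -> corner_swnc e (e * y).
Proof.
move=> he hey /idem_lift [F [hF [hyF hcF]]].
have heF := hcF e hey.
have heyF : GRing.comm e (y - F) := commrB hey heF.
have hFyF : GRing.comm F (y - F).
  exact/commrB/commr_refl/commr_sym/hcF/commr_refl.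
exists (e * F), (e * (y - F)); do !split.
- exact: corner_mul_comm.
- exact: corner_mul_comm.
- by rewrite /is_idem mul_idem_comm // hF.
- by rewrite heyF; apply: nilp_mul_comm.
- by rewrite !mul_idem_comm // hFyF.
- by left; rewrite -mulrDr subrK.
Qed.

Lemma corner_swncN e a : corner_swnc e a -> corner_swnc e (- a).
Proof.
case=> f [q [hfe [hqe [hf [hq [hfq ha]]]]]].
have hNqe : in_corner e (- q) by rewrite /in_corner mulrN mulNr -hqe.
exists f, (- q); do !split => //; first exact: nilpN.
- by rewrite mulrN mulNr hfq.
- by case: ha => ->; [right|left]; rewrite ?opprD ?opprB ?opprK // addrC.
Qed.

Lemma idem_mul_corner_shift e a : is_idem e -> in_corner e a ->
  e * (a + (1 - e)) = a.
Proof. by move=> he ha; rewrite mulrDr mulrBr mulr1 he subrr addr0 ha !mulrA he. Qed.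

Lemma corner_shift_mul_idem e a : is_idem e -> in_corner e a ->
  (a + (1 - e)) * e = a.
Proof. by move=> he ha; rewrite mulrDl mulrBl mul1r he subrr addr0 ha -!mulrA he. Qed.

Lemma corner_invertible_shift e a : is_idem e -> in_corner e a ->
  invertible (a + (1 - e)) -> corner_invertible e a.
Proof.
move=> he ha [b [hab hba]].
have ea : e * a = a by rewrite ha !mulrA he.
have ae : a * e = a by rewrite ha -!mulrA he.
have ex := idem_mul_corner_shift he ha.
have xe := corner_shift_mul_idem he ha.
exists (e * b * e); split; [|split].
- by rewrite /in_corner !mulrA he -!mulrA he.
- by rewrite !mulrA ae -ex -(mulrA e _ b) hab mulr1 he.
- by rewrite -mulrA ea -xe mulrA -(mulrA e b) hba mulr1 he.
Qed.

End Ring.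

Theorem lemma2p14 (R : nzRingType) (e : R) :
  GSWNC R -> is_idem e -> e != 0 -> corner_GSWNC e.
Proof.
move=> hG he _ a ha hna.
set x := a + (1 - e).
have ex : e * x = a := idem_mul_corner_shift he ha.
have hex : GRing.comm e x by rewrite /GRing.comm ex corner_shift_mul_idem.
have hx : swnc x by apply: hG => /(corner_invertible_shift he ha).
case: (swnc_strongly_nil_cleanN hx) => /strongly_nil_clean_nilp hy.
- by rewrite -ex; exact: corner_swnc_mul_idem.
- have := corner_swnc_mul_idem he (commrN hex) hy.
  by rewrite mulrN ex => /corner_swncN; rewrite opprK.
Qed.
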